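(* Let $R$ be a semisimple ring, with notation as in the context (so $J(R)=0$ and $\overline R=R$). Let $h_1\colon R^m\to R^n$ and $h_2\colon R^n\to R^\ell$ be column-adapted $R$-linear maps. Then $h_2\circ h_1\colon R^m\to R^\ell$ is column-adapted.
   Context: Let $R$ be an Artinian ring, $J(R)$ its Jacobson radical, $\overline R=R/J(R)$, and $\bar x$ (resp. $\bar A$) the image of an element (resp. entrywise image of a matrix). $\overline R$ is semisimple, $\overline R\cong \mathrm{Mat}_{\mu_1}(\mathbb D_1)\times\cdots\times\mathrm{Mat}_{\mu_q}(\mathbb D_q)$ with division rings $\mathbb D_k$; put $\mu=\mu_1+\cdots+\mu_q$. Fix orthogonal idempotents $e^k_i\in R$ ($1\le k\le q$, $1\le i\le\mu_k$) with $\sum_{k,i}e^k_i=1$ lifting the orthogonal idempotents $\bar e^k_i$ of $\overline R$ given by the diagonal matrix units of this decomposition (so $\bar e^k_i\overline R\cong\mathbb D_k^{\mu_k}$ and $e^k_iR\cong e^{k'}_{i'}R$ iff $k=k'$). Let $\mathbb L_{hk}=e^h_1Re^k_1$; then $\overline{\mathbb L_{kk}}=\mathbb D_k$ and $\overline{\mathbb L_{hk}}=0$ for $h\ne k$. The Peirce decomposition $R\cong\mathrm{End}(R_R)=\bigoplus\mathrm{Hom}(e^k_jR,e^h_iR)$, together with the isomorphisms $e^h_iR\cong e^h_1R$, gives an injective ring homomorphism (the Artin–Wedderburn embedding) $\Phi\colon R\to\mathrm{Mat}_\mu(R)$, $x\mapsto(\Phi_{hk}(x))_{h,k=1}^q$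 a $q\times q$ block matrix with $\Phi_{hk}(x)\in\mathrm{Mat}_{\mu_h,\mu_k}(\mathbb L_{hk})$; its reduction $\overline\Phi\colon\overline R\to\mathrm{Mat}_\mu(\overline R)$ sends $\bar x$ to the block-diagonal matrix whose $k$-th block is the $\mathrm{Mat}_{\mu_k}(\mathbb D_k)$-component of $\bar x$. Vectors $R^n$ are columns (right $R$-modules); an $R$-linear $h\colon R^m\to R^n$ is an $n\times m$ matrix, and $\Phi(h)\in\mathrm{Mat}_{\mu n,\mu m}(R)$ is obtained by replacing each entry $x$ by $\Phi(x)$; similarly $\overline\Phi(\bar h)$. Distinguished basis: for $1\le k\le q$, $1\le a\le m$, $1\le r\le\mu_k$, let $\vec v(k)_{(a-1)\mu_k+r}$ be the standard basis vector of $R^{\mu m}$ of index $(a-1)\mu+\mu_1+\cdots+\mu_{k-1}+r$; define $\vec w(k)_i$ ($1\le i\le\mu_kn$) in $R^{\mu n}$ in the same way, and use bars for images in $\overline R^{\mu m},\overline R^{\mu n}$. Then $\overline\Phi(\bar h)(\overline{\vec v(k)_j})\in\bigoplus_{i=1}^{\mu_kn}\overline{\vec w(k)_i}\cdot\mathbb D_k$. For surjective $h$ and each $k$, $\mathfrak S(h,k)$ is the smallest, in the lexicographic order on increasingly sorted sequences, subset $S\subset\{1,\dots,\mu_km\}$ such that $\{\overline\Phi(\bar h)(\overline{\vec v(k)_j}):j\in S\}$ is a basis of the right $\mathbb D_k$-module $\bigoplus_{i=1}^{\mu_kn}\overline{\vec w(k)_i}\cdot\mathbb D_k$ (it has $\mu_kn$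 elements). A surjective $R$-linear $h\colon R^m\to R^n$ is column-adapted if for every $k$, writing $\mathfrak S(h,k)=\{j_1<\cdots<j_{\mu_kn}\}$, one has $\Phi(h)(\vec v(k)_{j_i})=\vec w(k)_i$ for all $1\le i\le\mu_kn$ (and hence also $\overline\Phi(\bar h)(\overline{\vec v(k)_{j_i}})=\overline{\vec w(k)_i}$). *)

From HB Require Import structures.
From mathcomp Require Import all_boot all_order all_algebra.
Set Implicit Arguments. Unset Strict Implicit. Unset Printing Implicit Defensive.
Import GRing.Theory.
Local Open Scope ring_scope.

(* Conventions: all indices are 0-based.  Blocks k < q, positions i < mu k.
   e k i  = the idempotent e^k_{i+1};  e k 0 = e^k_1.
   a k i  in e k 0 R e k i and b k i in e k i R e k 0 are mutually inverse
   (a k i * b k i = e k 0, b k i * a k i = e k i): left multiplication by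
   a k i is the chosen isomorphism e^k_{i+1} R ~= e^k_1 R (identity for i=0). *)

Section AW.
Variable R : nzRingType.
Variables (q : nat) (mu : nat -> nat) (e a b : nat -> nat -> R).

Definition inL (h k : nat) (x : R) : Prop := e h 0 * x * e k 0 = x.

Definition AW_data : Prop :=
  [/\ (forall k, (k < q)%N -> (0 < mu k)%N) /\
      (forall k i k' i', (k < q)%N -> (i < mu k)%N -> (k' < q)%N -> (i' < mu k')%N ->
          e k i * e k' i' = if (k == k') && (i == i') then e k i else 0),
      \sum_(k < q) \sum_(i < mu k) e k i = 1,
      (forall k i, (k < q)%N -> (i < mu k)%N ->
          [/\ e k 0 * a k i * e k i = a k i, e k i * b k i * e k 0 = b k i,
              a k i * b k i = e k 0 & b k i * a k i = e k i]),
      (forall k, (k < q)%N -> a k 0 = e k 0 /\ b k 0 = e k 0) &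
   (
      (forall h k x, (h < q)%N -> (k < q)%N -> h != k -> e h 0 * x * e k 0 = 0) /\
      (forall k, (k < q)%N -> e k 0 != 0 /\
          forall x, inL k k x -> x != 0 ->
            exists y, [/\ inL k k y, x * y = e k 0 & y * x = e k 0]))].

Definition off (k : nat) : nat := (\sum_(j < k) mu j)%N.
Definition muT : nat := off q.

(* decoding an index P < mu into (block, position) *)
Definition blk (P : nat) : nat := (\sum_(k < q) (off k.+1 <= P : nat))%N.
Definition pos (P : nat) : nat := (P - off (blk P))%N.

(* entry (P,Q) of the Artin--Wedderburn embedding Phi(x) *)
Definition PhiE (x : R) (P Q : nat) : R :=
  a (blk P) (pos P) * x * b (blk Q) (pos Q).

Definition Phi (x : R) : 'M[R]_muT := \matrix_(P, Q) PhiE x P Q.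

(* entry of a matrix addressed by natural numbers (0 outside range) *)
Definition mxe (n m : nat) (A : 'M[R]_(n, m)) (i j : nat) : R :=
  match insub i, insub j with Some i', Some j' => A i' j' | _, _ => 0 end.

(* Phi(h) : replace every entry of h by its image under Phi *)
Definition PhiM (n m : nat) (h : 'M[R]_(n, m)) : 'M[R]_(muT * n, muT * m) :=
  \matrix_(I, J) PhiE (mxe h (I %/ muT) (J %/ muT)) (I %% muT) (J %% muT).

(* index of the distinguished basis vector v(k)_{j+1} (resp. w(k)_{j+1}) *)
Definition vidx (k j : nat) : nat := ((j %/ mu k) * muT + off k + j %% mu k)%N.

Definition stdv (N : nat) (idx : nat) (c : R) : 'cV[R]_N :=
  \col_I (if val I == idx then c else 0).

Definition vvec (m k j : nat) : 'cV[R]_(muT * m) := stdv _ (vidx k j) 1.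
(* w(k)_{i+1} in R^{mu n}, the unit of D_k = L_kk at its position *)
Definition wvec (n k i : nat) : 'cV[R]_(muT * n) := stdv _ (vidx k i) (e k 0).

(* membership in the right D_k-module (+)_i w(k)_i . D_k *)
Definition inMk (N k : nat) (c : 'cV[R]_(muT * N)) : Prop :=
  forall I : 'I_(muT * N),
    if (off k <= I %% muT < off k + mu k)%N then inL k k (c I 0) else c I 0 = 0.

Definition rscal (N : nat) (c : 'cV[R]_N) (d : R) : 'cV[R]_N := \col_I (c I 0 * d).

Definition is_basis_k (n m : nat) (h : 'M[R]_(n, m)) (k : nat)
    (S : {set 'I_(mu k * m)}) : Prop :=
  let c (j : 'I_(mu k * m)) := PhiM h *m vvec m k j in
  [/\ (forall j, j \in S -> inMk k (c j)),
      {in S &, injective c},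
      (forall y, inMk k y -> exists d : 'I_(mu k * m) -> R,
          (forall j, inL k k (d j)) /\ y = \sum_(j in S) rscal (c j) (d j)) &
      (forall d : 'I_(mu k * m) -> R, (forall j, inL k k (d j)) ->
          \sum_(j in S) rscal (c j) (d j) = 0 -> forall j, j \in S -> d j = 0)].

Fixpoint lexle (s t : seq nat) : bool :=
  match s, t with
  | [::], _ => true
  | _ :: _, [::] => false
  | x :: s', y :: t' => (x < y)%N || ((x == y) && lexle s' t')
  end.

Definition sortedS (N : nat) (S : {set 'I_N}) : seq nat :=
  sort leq [seq val j | j <- enum S].

Definition is_frakS (n m : nat) (h : 'M[R]_(n, m)) (k : nat)
    (S : {set 'I_(mu k * m)}) : Prop :=
  is_basis_k h S /\
  forall S' : {set 'I_(mu k * m)}, is_basis_k h S' -> lexle (sortedS S) (sortedS S').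

Definition surj_mx (n m : nat) (h : 'M[R]_(n, m)) : Prop :=
  forall y : 'cV[R]_n, exists x : 'cV[R]_m, h *m x = y.

Definition column_adapted (n m : nat) (h : 'M[R]_(n, m)) : Prop :=
  surj_mx h /\
  forall k, (k < q)%N -> forall S : {set 'I_(mu k * m)}, is_frakS h S ->
    forall i, (i < mu k * n)%N ->
      PhiM h *m vvec m k (nth 0%N (sortedS S) i) = wvec n k i.

End AW.

(* The columns c_j = Phi(h) v(k)_j of Phi(h) lie in the right
   D_k-module M_k spanned by the w(k)_i, and span it when h is onto.  Keeping,
   in increasing order, the indices j whose column is not spanned by the
   earlier columns yields a basis that is lexicographically smaller than any
   other basis, so it is S(h, k).
   If h1 is column-adapted with S(h1, k) = g1, then Phi(h1) v(k)_{g1 s} = w(k)_s,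
   so by multiplicativity of Phi the column g1 s of Phi(h2 h1) is the column s
   of Phi(h2), while every column of Phi(h1) before g1 t is a combination of the
   w(k)_s with s < t.  Hence the greedy scan of h2 h1 keeps exactly the indices
   g1 (g2 i), where g2 = S(h2, k), and sends the i-th of them to w(k)_i. *)

From Pilot Require Import Defs.
From Stdlib Require Import ClassicalEpsilon.
From HB Require Import structures.
From mathcomp Require Import all_boot all_order all_algebra zify.
Set Implicit Arguments. Unset Strict Implicit. Unset Printing Implicit Defensive.
Import GRing.Theory.

Lemma big_ord_mul (V : nmodType) p N (F : nat -> V) :
  (\sum_(K < p * N) F K = \sum_(r < N) \sum_(P < p) F (r * p + P)%N)%R.
Proof.
rewrite -(big_mkord xpredT) mulnC big_nat_mul big_mkord.
apply: eq_bigr => r _; rewrite mulSn -{1}[r * p]add0n big_addn addnK big_mkord.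
by apply: eq_bigr => P _; rewrite addnC.
Qed.

Section BlockIndex.
Variables (q : nat) (mu : nat -> nat).
Local Notation off := (off mu).
Local Notation muT := (muT q mu).
Local Notation blk := (blk q mu).
Local Notation pos := (pos q mu).
Local Notation vidx := (vidx q mu).

Lemma offS k : off k.+1 = off k + mu k.
Proof. by rewrite /Defs.off big_ord_recr. Qed.

Lemma leq_off i j : i <= j -> off i <= off j.
Proof.
move=> /subnK <-; elim: (j - i) => [|d IH] //=.
by rewrite addSn offS (leq_trans IH) ?leq_addr.
Qed.

Lemma sum_ord_ltn k0 n : (\sum_(k < n) (k < k0 : nat) = minn k0 n)%N.
Proof.
elim: n => [|n IH]; first by rewrite big_ord0; lia.
by rewrite big_ord_recr /= IH; case: (ltnP n k0) => H; lia.
Qed.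

Lemma blk_off k0 i : k0 < q -> i < mu k0 -> blk (off k0 + i) = k0.
Proof.
move=> hk hi; rewrite /Defs.blk.
rewrite (eq_bigr (fun k : 'I_q => (k < k0 : nat))) ?sum_ord_ltn; first lia.
move=> k _; congr nat_of_bool; case: (ltnP k k0) => H.
  by rewrite (leq_trans (leq_off H)) ?leq_addr.
apply/negbTE; rewrite -ltnNge (leq_trans _ (leq_off (_ : k0.+1 <= k.+1))) //.
by rewrite offS ltn_add2l.
Qed.

Lemma pos_off k0 i : k0 < q -> i < mu k0 -> pos (off k0 + i) = i.
Proof. by move=> hk hi; rewrite /Defs.pos blk_off // addKn. Qed.

Lemma muT_decomp P : P < muT -> exists k0 i, [/\ k0 < q, i < mu k0 & P = off k0 + i].
Proof.
rewrite /Defs.muT; elim: q => [|n IH]; first by rewrite /Defs.off big_ord0.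
rewrite offS => hP; case: (ltnP P (off n)) => H.
  by have [k0 [i [? ? ?]]] := IH H; exists k0, i; split => //; apply: ltnW.
by exists n, (P - off n); split => //; lia.
Qed.

Lemma blkP P : P < muT -> [/\ blk P < q, pos P < mu (blk P) & off (blk P) + pos P = P].
Proof. by move=> /muT_decomp [k0 [i [hk hi ->]]]; rewrite pos_off // blk_off. Qed.

Lemma off_block_le k : k < q -> off k + mu k <= muT.
Proof. by move=> hk; rewrite -offS leq_off. Qed.

Lemma mem_block P k : P < muT -> k < q -> (off k <= P < off k + mu k) = (blk P == k).
Proof.
move=> hP hk; have [h1 h2 h3] := blkP hP; apply/idP/eqP.
  by move=> /andP [H1 H2]; rewrite -(subnKC H1) blk_off //; lia.
by move=> E; rewrite -h3 E; rewrite E in h2; lia.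
Qed.

Section Vidx.
Hypothesis mu_gt0 : forall k, k < q -> 0 < mu k.
Variable k : nat.
Hypothesis hk : k < q.

Lemma ltn_off_mod j : off k + j %% mu k < muT.
Proof.
have := off_block_le hk; have : j %% mu k < mu k by rewrite ltn_mod mu_gt0.
lia.
Qed.

Lemma vidx_mod j : vidx k j %% muT = off k + j %% mu k.
Proof. by rewrite /Defs.vidx -addnA modnMDl modn_small // ltn_off_mod. Qed.

Lemma vidx_div j : vidx k j %/ muT = j %/ mu k.
Proof.
have := ltn_off_mod j => hlt.
by rewrite /Defs.vidx -addnA divnMDl ?(divn_small hlt) ?addn0 //; lia.
Qed.

Lemma vidx_lt j N : j < mu k * N -> vidx k j < muT * N.
Proof.
move=> hj; have := ltn_off_mod j => hlt.
rewrite (divn_eq (vidx k j) muT) vidx_mod vidx_div.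
have : j %/ mu k < N by rewrite ltn_divLR ?mu_gt0 // mulnC.
by nia.
Qed.

Lemma vidx_inj : injective (vidx k).
Proof.
move=> j1 j2 E; rewrite (divn_eq j1 (mu k)) (divn_eq j2 (mu k)).
have := vidx_div j1; have := vidx_mod j1; rewrite E vidx_div vidx_mod.
by move=> /addnI -> ->.
Qed.

Lemma blk_vidx j : blk (vidx k j %% muT) = k.
Proof. by rewrite vidx_mod blk_off // ltn_mod mu_gt0. Qed.

Lemma pos_vidx j : pos (vidx k j %% muT) = j %% mu k.
Proof. by rewrite vidx_mod pos_off // ltn_mod mu_gt0. Qed.

Lemma vidx_onto I N : I < muT * N -> blk (I %% muT) = k ->
  exists2 j, j < mu k * N & vidx k j = I.
Proof.
move=> hI hb; have hT : 0 < muT by have := ltn_off_mod 0; lia.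
have [_ h2 h3] := blkP (ltn_pmod I hT); rewrite hb in h2 h3.
exists ((I %/ muT) * mu k + pos (I %% muT)).
  have : I %/ muT < N by rewrite ltn_divLR // mulnC.
  by nia.
rewrite /Defs.vidx divnMDl ?mu_gt0 // (divn_small h2) addn0.
by rewrite modnMDl (modn_small h2) -addnA h3 -divn_eq.
Qed.

End Vidx.

Lemma big_muT_blocks (V : nmodType) (F : nat -> V) :
  (\sum_(P < muT) F P = \sum_(k < q) \sum_(i < mu k) F (off k + i)%N)%R.
Proof.
rewrite /Defs.muT; elim: q => [|n IH]; first by rewrite /Defs.off !big_ord0.
rewrite big_ord_recr /= -IH offS -!(big_mkord xpredT) (big_cat_nat _ (leq_addr _ _)) //=.
congr (_ + _)%R; rewrite -{1}[off n]add0n big_addn addKn big_mkord.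
by apply: eq_bigr => i _; rewrite addnC.
Qed.

End BlockIndex.

Lemma lexle_refl s : lexle s s.
Proof. by elim: s => //= x s ->; rewrite eqxx ltnn. Qed.

Lemma lexle_anti s t : lexle s t -> lexle t s -> s = t.
Proof.
elim: s t => [|x s IH] [|y t] //=.
by case: (ltngtP x y) => //= [->] /= H1 H2; rewrite (IH t H1 H2).
Qed.

Lemma lexle_first_diff s t x : sorted ltn s -> sorted ltn t ->
  (forall y, y < x -> (y \in s) = (y \in t)) -> x \in s -> x \notin t ->
  has (fun y => x < y) t -> lexle s t.
Proof.
elim: s t => [|a s IH] [|b t] //= hs ht hst hx hxt hh.
have ma : all (ltn a) s by apply: order_path_min hs; exact: ltn_trans.
have mb : all (ltn b) t by apply: order_path_min ht; exact: ltn_trans.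
have notin_tail c u : all (ltn c) u -> c \notin u.
  by move=> /allP hu; apply/negP => /hu /=; rewrite ltnn.
have hxa : a <= x.
  by move: hx; rewrite inE => /orP [/eqP -> //|/(allP ma)/ltnW].
case: (ltngtP a b) => //= [hab|hab].
  exfalso; case: (ltngtP b x) => [hbx|hbx|hbx].
  - have := hst b hbx; rewrite !inE eqxx /= => /orP [/eqP E|/(allP ma) H].
      by move: hab; rewrite E ltnn.
    by have := ltn_trans H hab; rewrite ltnn.
  - by have := ltn_trans hbx hab; rewrite ltnNge hxa.
  - by move: hxt; rewrite -hbx inE eqxx.
subst b; have xa : x != a by apply: contraNneq hxt => ->; rewrite inE eqxx.
apply: IH; [exact: path_sorted hs | exact: path_sorted ht | | | |].
- move=> y hy; have := hst y hy; rewrite !inE.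
  case: (eqVneq y a) => [-> _|_ //].
  by rewrite (negbTE (notin_tail _ _ ma)) (negbTE (notin_tail _ _ mb)).
- by move: hx; rewrite inE (negbTE xa).
- by move: hxt; rewrite inE negb_or => /andP [].
- by case/orP: hh => [hxa'|//]; rewrite ltnNge hxa in hxa'.
Qed.

Lemma sortedS_sorted N (S : {set 'I_N}) : sorted ltn (sortedS S).
Proof.
rewrite ltn_sorted_uniq_leq sort_uniq map_inj_uniq ?enum_uniq /=; last exact: val_inj.
exact: (sort_sorted leq_total).
Qed.

Lemma mem_sortedS N (S : {set 'I_N}) (j : 'I_N) : (val j \in sortedS S) = (j \in S).
Proof. by rewrite /sortedS mem_sort mem_map ?mem_enum //; exact: val_inj. Qed.

Lemma sortedS_lt N (S : {set 'I_N}) x : x \in sortedS S -> x < N.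
Proof. by rewrite /sortedS mem_sort; case/mapP => j _ ->; exact: ltn_ord. Qed.

Lemma nth_sortedS_lt N (S : {set 'I_N}) s : s < size (sortedS S) -> nth 0 (sortedS S) s < N.
Proof. by move=> hs; apply/sortedS_lt/mem_nth. Qed.

Lemma sortedS_inj N : injective (@sortedS N).
Proof. by move=> S1 S2 E; apply/setP => j; rewrite -!mem_sortedS E. Qed.

Lemma sorted_ltn_indexE s x y : sorted ltn s -> x \in s -> y \in s ->
  (index x s < index y s) = (x < y).
Proof.
move=> ss xs ys; apply/idP/idP; first exact: (sorted_ltn_index ltn_trans ss).
apply: contraTT; rewrite -!leqNgt leq_eqVlt => /orP [/eqP E|].
  by rewrite -(nth_index 0 xs) -E nth_index.
by move/(sorted_ltn_index ltn_trans ss _ _ ys xs)/ltnW.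
Qed.

Lemma sorted_ltn_nthE s i j : sorted ltn s -> i < size s -> j < size s ->
  (nth 0 s i < nth 0 s j) = (i < j).
Proof.
move=> ss hi hj; have us := sorted_uniq ltn_trans ltnn ss.
by rewrite -(sorted_ltn_indexE ss) ?mem_nth // !index_uniq.
Qed.

Local Open Scope ring_scope.

Definition asbool (P : Prop) : bool :=
  if excluded_middle_informative P then true else false.

Lemma asboolP (P : Prop) : reflect P (asbool P).
Proof. by rewrite /asbool; case: excluded_middle_informative => h; constructor. Qed.

Section MatrixFacts.
Variable R : nzRingType.

Lemma rscalr0 M (c : 'cV[R]_M) : rscal c 0 = 0.
Proof. by apply/matrixP => I z; rewrite !mxE mulr0. Qed.

Lemma rscal0r M d : rscal (0 : 'cV[R]_M) d = 0.
Proof. by apply/matrixP => I z; rewrite !mxE mul0r. Qed.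

Lemma rscalDl M (c1 c2 : 'cV[R]_M) d : rscal (c1 + c2) d = rscal c1 d + rscal c2 d.
Proof. by apply/matrixP => I z; rewrite !mxE mulrDl. Qed.

Lemma rscalDr M (c : 'cV[R]_M) d1 d2 : rscal c (d1 + d2) = rscal c d1 + rscal c d2.
Proof. by apply/matrixP => I z; rewrite !mxE mulrDr. Qed.

Lemma rscalNl M (c : 'cV[R]_M) d : rscal (- c) d = - rscal c d.
Proof. by apply/matrixP => I z; rewrite !mxE mulNr. Qed.

Lemma rscalNr M (c : 'cV[R]_M) d : rscal c (- d) = - rscal c d.
Proof. by apply/matrixP => I z; rewrite !mxE mulrN. Qed.

Lemma rscalA M (c : 'cV[R]_M) x y : rscal (rscal c x) y = rscal c (x * y).
Proof. by apply/matrixP => I z; rewrite !mxE mulrA. Qed.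

Lemma rscal_suml M (I : finType) (P : pred I) (F : I -> 'cV[R]_M) d :
  rscal (\sum_(i | P i) F i) d = \sum_(i | P i) rscal (F i) d.
Proof. by elim/big_rec2: _ => [|i y1 y2 _ <-]; rewrite ?rscal0r ?rscalDl. Qed.

Lemma mulmx_rscal N M (F : 'M[R]_(N, M)) c d : F *m rscal c d = rscal (F *m c) d.
Proof.
apply/matrixP => I z; rewrite !mxE mulr_suml; apply: eq_bigr => j _.
by rewrite !mxE mulrA.
Qed.

Lemma mulmx_stdv N M (A : 'M[R]_(N, M)) (j : 'I_M) c :
  A *m stdv M j c = \col_I (A I j * c).
Proof.
apply/matrixP => I z; rewrite !mxE (bigD1 j) //= mxE eqxx big1 ?addr0 // => j'.
by move=> /negbTE nj; rewrite mxE (inj_eq val_inj) nj mulr0.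
Qed.

Lemma mxeE n m (A : 'M[R]_(n, m)) x y (hx : (x < n)%N) (hy : (y < m)%N) :
  mxe A x y = A (Ordinal hx) (Ordinal hy).
Proof.
rewrite /mxe (insubT (fun i => (i < n)%N) hx) (insubT (fun i => (i < m)%N) hy) /=.
by congr (A _ _); apply: val_inj.
Qed.

Lemma mxe_col N (z : 'cV[R]_N) (I : 'I_N) : mxe z I 0 = z I 0.
Proof. by rewrite (mxeE _ (ltn_ord I) (ltn0Sn 0)); congr (z _ _); apply: val_inj. Qed.

Lemma surj_mxM n p m (h2 : 'M[R]_(n, p)) (h1 : 'M[R]_(p, m)) :
  surj_mx h2 -> surj_mx h1 -> surj_mx (h2 *m h1).
Proof.
by move=> hs2 hs1 y; have [x2 <-] := hs2 y; have [x1 <-] := hs1 x2; exists x1; rewrite mulmxA.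
Qed.

End MatrixFacts.

Section ArtinWedderburn.
Variable R : nzRingType.
Variables (q : nat) (mu : nat -> nat) (e a b : nat -> nat -> R).
Hypothesis mu_gt0 : forall k, (k < q)%N -> (0 < mu k)%N.
Hypothesis e_orth : forall k i k' i', (k < q)%N -> (i < mu k)%N -> (k' < q)%N -> (i' < mu k')%N ->
  e k i * e k' i' = if (k == k') && (i == i') then e k i else 0.
Hypothesis e_sum : \sum_(k < q) \sum_(i < mu k) e k i = 1.
Hypothesis ab_iso : forall k i, (k < q)%N -> (i < mu k)%N ->
  [/\ e k 0 * a k i * e k i = a k i, e k i * b k i * e k 0 = b k i,
      a k i * b k i = e k 0 & b k i * a k i = e k i].
Hypothesis ab0 : forall k, (k < q)%N -> a k 0 = e k 0 /\ b k 0 = e k 0.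
Hypothesis L_offdiag : forall h k x, (h < q)%N -> (k < q)%N -> h != k -> e h 0 * x * e k 0 = 0.
Hypothesis L_division : forall k, (k < q)%N -> e k 0 != 0 /\
  forall x, inL e k k x -> x != 0 -> exists y, [/\ inL e k k y, x * y = e k 0 & y * x = e k 0].

Local Notation off := (off mu).
Local Notation muT := (muT q mu).
Local Notation blk := (blk q mu).
Local Notation pos := (pos q mu).
Local Notation vidx := (vidx q mu).
Local Notation PhiE := (PhiE q mu a b).
Local Notation PhiM := (PhiM q mu a b).
Local Notation inMk := (inMk e).

Lemma e_idem k i : (k < q)%N -> (i < mu k)%N -> e k i * e k i = e k i.
Proof. by move=> hk hi; rewrite e_orth // !eqxx. Qed.

Lemma mul_e0a k i : (k < q)%N -> (i < mu k)%N -> e k 0 * a k i = a k i.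
Proof.
move=> hk hi; have [h1 _ _ _] := ab_iso hk hi.
by rewrite -{1}h1 !mulrA e_idem ?mu_gt0 // h1.
Qed.

Lemma mul_be0 k i : (k < q)%N -> (i < mu k)%N -> b k i * e k 0 = b k i.
Proof.
move=> hk hi; have [_ h1 _ _] := ab_iso hk hi.
by rewrite -{1}h1 -!mulrA e_idem ?mu_gt0 // !mulrA h1.
Qed.

Lemma mul_ab h P k p : (h < q)%N -> (P < mu h)%N -> (k < q)%N -> (p < mu k)%N ->
  a h P * b k p = if (h == k) && (P == p) then e k 0 else 0.
Proof.
move=> hh hP hk hp; have [haP _ _ _] := ab_iso hh hP; have [_ hbp hab _] := ab_iso hk hp.
have ae : a h P * e h P = a h P by rewrite -{1}haP -mulrA e_idem.
have eb : e k p * b k p = b k p by rewrite -{1}hbp !mulrA e_idem.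
rewrite -ae -eb mulrA -(mulrA _ (e h P)) e_orth //.
case: andP => [[/eqP E1 /eqP E2]|_]; last by rewrite mulr0 mul0r.
by subst; rewrite ae hab.
Qed.

(* [b_P a_P = e_P], and these idempotents add up to [1]. *)
Lemma sum_ba : \sum_(P < muT) b (blk P) (pos P) * a (blk P) (pos P) = 1.
Proof.
rewrite (big_muT_blocks q mu (fun P => b (blk P) (pos P) * a (blk P) (pos P))) -e_sum.
apply: eq_bigr => k _; apply: eq_bigr => i _.
by rewrite blk_off ?pos_off //; have [_ _ _ ->] := ab_iso (ltn_ord k) (ltn_ord i).
Qed.

Lemma muT_gt0 N (I : 'I_(muT * N)) : (0 < muT)%N.
Proof. by move: (ltn_ord I); move: (nat_of_ord I); case: muT. Qed.

Lemma ltn_div_muT N (I : 'I_(muT * N)) : (I %/ muT < N)%N.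
Proof. by rewrite ltn_divLR ?(muT_gt0 I) //; have := ltn_ord I; lia. Qed.

Lemma ltn_mod_muT N (I : 'I_(muT * N)) : (I %% muT < muT)%N.
Proof. by rewrite ltn_pmod ?(muT_gt0 I). Qed.

Lemma PhiM_mul n p m (A : 'M[R]_(n, p)) (B : 'M[R]_(p, m)) :
  PhiM (A *m B) = PhiM A *m PhiM B.
Proof.
apply/matrixP => I J; have hT := muT_gt0 I.
set aI := a (blk (I %% muT)) (pos (I %% muT)); set bJ := b (blk (J %% muT)) (pos (J %% muT)).
pose F K := PhiE (mxe A (I %/ muT) (K %/ muT)) (I %% muT) (K %% muT) *
            PhiE (mxe B (K %/ muT) (J %/ muT)) (K %% muT) (J %% muT).
rewrite !mxE (eq_bigr (fun K : 'I_(muT * p) => F K)); last by move=> K _; rewrite !mxE.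
rewrite big_ord_mul (mxeE _ (ltn_div_muT I) (ltn_div_muT J)) mxE /Defs.PhiE -/aI -/bJ.
rewrite mulr_sumr mulr_suml; apply: eq_bigr => r _.
have FE (P : 'I_muT) : F (r * muT + P)%N =
    aI * mxe A (I %/ muT) r * (b (blk P) (pos P) * a (blk P) (pos P)) * (mxe B r (J %/ muT) * bJ).
  rewrite /F /Defs.PhiE divnMDl // (divn_small (ltn_ord P)) addn0.
  by rewrite modnMDl (modn_small (ltn_ord P)) !mulrA.
rewrite (eq_bigr _ (fun P _ => FE P)) -mulr_suml -mulr_sumr sum_ba mulr1.
rewrite (mxeE _ (ltn_div_muT I) (ltn_ord r)) (mxeE _ (ltn_ord r) (ltn_div_muT J)) !mulrA.
by congr (_ * A _ _ * B _ _ * _); apply: val_inj.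
Qed.

Definition phicol n m (h : 'M[R]_(n, m)) k j := PhiM h *m vvec R q mu m k j.

Lemma phicolE n m (h : 'M[R]_(n, m)) k j (I : 'I_(muT * n)) :
  (k < q)%N -> (j < mu k * m)%N ->
  phicol h k j I 0 =
    a (blk (I %% muT)) (pos (I %% muT)) * mxe h (I %/ muT) (j %/ mu k) * b k (j %% mu k).
Proof.
move=> hk hj; have hv := vidx_lt mu_gt0 hk hj.
rewrite /phicol /vvec (_ : vidx k j = Ordinal hv) // mulmx_stdv !mxE mulr1 /Defs.PhiE /=.
by rewrite vidx_div // blk_vidx // pos_vidx.
Qed.

Lemma phicolM n p m (h2 : 'M[R]_(n, p)) (h1 : 'M[R]_(p, m)) k j :
  phicol (h2 *m h1) k j = PhiM h2 *m phicol h1 k j.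
Proof. by rewrite /phicol PhiM_mul mulmxA. Qed.

Lemma inL_e0l k x : (k < q)%N -> inL e k k x -> e k 0 * x = x.
Proof. by move=> hk <-; rewrite !mulrA e_idem ?mu_gt0. Qed.

Lemma inL_e0r k x : (k < q)%N -> inL e k k x -> x * e k 0 = x.
Proof. by move=> hk <-; rewrite -!mulrA e_idem ?mu_gt0. Qed.

Lemma PhiE_block P x k r : (P < muT)%N -> (k < q)%N -> (r < mu k)%N ->
  let y := a (blk P) (pos P) * x * b k r in
  if blk P == k then inL e k k y else y = 0.
Proof.
move=> hP hk hr /=; have [h1 h2 _] := blkP hP.
case: eqP => [E|/eqP NE].
  by rewrite /inL E; rewrite E in h2; rewrite !mulrA mul_e0a // -!mulrA mul_be0.
move: (L_offdiag (a (blk P) (pos P) * x * b k r) h1 hk NE).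
by rewrite !mulrA mul_e0a // -!mulrA mul_be0 // !mulrA.
Qed.

Lemma phicol_inMk n m (h : 'M[R]_(n, m)) k j : (k < q)%N -> (j < mu k * m)%N ->
  inMk k (phicol h k j).
Proof.
move=> hk hj I; rewrite (mem_block (ltn_mod_muT I) hk) phicolE //.
by apply: PhiE_block; rewrite ?ltn_mod_muT ?ltn_mod ?mu_gt0.
Qed.

Section DivisionSpan.
Variable k : nat.
Hypothesis hk : (k < q)%N.
Local Notation D := (inL e k k).
Local Notation ek := (e k 0).

Lemma inL0 : D 0.
Proof. by rewrite /inL mulr0 mul0r. Qed.

Lemma inLN x : D x -> D (- x).
Proof. by rewrite /inL => hx; rewrite mulrN mulNr hx. Qed.

Lemma inLD x y : D x -> D y -> D (x + y).
Proof. by rewrite /inL => hx hy; rewrite mulrDr mulrDl hx hy. Qed.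

Lemma inLM x y : D x -> D y -> D (x * y).
Proof. by move=> hx hy; rewrite /inL mulrA inL_e0l // -mulrA inL_e0r. Qed.

Lemma inL_e0 : D ek.
Proof. by rewrite /inL !e_idem ?mu_gt0. Qed.

Definition spanned N M (c : 'I_N -> 'cV[R]_M) (A : pred 'I_N) (y : 'cV[R]_M) :=
  exists d : 'I_N -> R, (forall j, D (d j)) /\ y = \sum_(j | A j) rscal (c j) (d j).

Definition dfree N M (c : 'I_N -> 'cV[R]_M) (B : {set 'I_N}) :=
  forall d : 'I_N -> R, (forall j, D (d j)) ->
    \sum_(j in B) rscal (c j) (d j) = 0 -> forall j, j \in B -> d j = 0.

(* The unit of D_k is e_k, not 1: a vector lies in its own D_k-span only if
   it is fixed by right multiplication by e_k. *)
Definition rfixed M (y : 'cV[R]_M) := rscal y ek = y.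

Lemma inMk_rfixed N (y : 'cV[R]_(muT * N)) : inMk k y -> rfixed y.
Proof.
move=> hy; apply/matrixP => I z; rewrite !mxE (ord1 z).
by have := hy I; case: ifP => _ => [/inL_e0r -> | ->]; rewrite ?mul0r.
Qed.

Section Spanned.
Variables (N M : nat) (c : 'I_N -> 'cV[R]_M) (A : pred 'I_N).

Lemma spanned0 : spanned c A 0.
Proof.
exists (fun _ => 0); split => [j|]; first exact: inL0.
by rewrite big1 // => j _; rewrite rscalr0.
Qed.

Lemma spannedD y1 y2 : spanned c A y1 -> spanned c A y2 -> spanned c A (y1 + y2).
Proof.
move=> [d1 [h1 ->]] [d2 [h2 ->]]; exists (fun j => d1 j + d2 j).
by split=> [j|]; [apply: inLD | rewrite -big_split; apply: eq_bigr => j _; rewrite rscalDr].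
Qed.

Lemma spannedN y : spanned c A y -> spanned c A (- y).
Proof.
move=> [d [h ->]]; exists (fun j => - d j).
by split=> [j|]; [apply: inLN | rewrite -sumrN; apply: eq_bigr => j _; rewrite rscalNr].
Qed.

Lemma spanned_rscal y x : D x -> spanned c A y -> spanned c A (rscal y x).
Proof.
move=> hx [d [h ->]]; exists (fun j => d j * x).
by split=> [j|]; [apply: inLM | rewrite rscal_suml; apply: eq_bigr => j _; rewrite rscalA].
Qed.

Lemma spanned_sum (I : finType) (P : pred I) (F : I -> 'cV[R]_M) :
  (forall i, P i -> spanned c A (F i)) -> spanned c A (\sum_(i | P i) F i).
Proof. by move=> H; apply: big_ind => //; [exact: spanned0 | exact: spannedD]. Qed.

Lemma spanned_gen j0 : A j0 -> rfixed (c j0) -> spanned c A (c j0).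
Proof.
move=> hA hr; exists (fun j => if j == j0 then ek else 0); split.
  by move=> j; case: eqP => _; [exact: inL_e0 | exact: inL0].
rewrite (bigD1 j0) //= eqxx hr big1 ?addr0 // => j /andP [_ /negbTE ->].
by rewrite rscalr0.
Qed.

End Spanned.

Lemma spanned_trans N N' M (c : 'I_N -> 'cV[R]_M) (c' : 'I_N' -> 'cV[R]_M) A B y :
  spanned c A y -> (forall j, A j -> spanned c' B (c j)) -> spanned c' B y.
Proof.
by move=> [d [h ->]] H; apply: spanned_sum => j hj; apply: spanned_rscal => //; exact: H.
Qed.

Lemma spanned_sub N M (c : 'I_N -> 'cV[R]_M) (A B : pred 'I_N) y :
  (forall j, A j -> B j) -> (forall j, rfixed (c j)) -> spanned c A y -> spanned c B y.
Proof.
by move=> hAB hr hy; apply: spanned_trans hy _ => j hj; apply: spanned_gen; [apply: hAB|].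
Qed.

Lemma spanned_mulmx N M M' (F : 'M[R]_(M', M)) (c : 'I_N -> 'cV[R]_M) A y :
  spanned c A y -> spanned (fun j => F *m c j) A (F *m y).
Proof.
move=> [d [h ->]]; exists d; split => //.
by rewrite mulmx_sumr; apply: eq_bigr => j _; rewrite mulmx_rscal.
Qed.

Lemma eq_spanned N M (c c' : 'I_N -> 'cV[R]_M) A y :
  c =1 c' -> spanned c A y -> spanned c' A y.
Proof.
by move=> E [d [hd ->]]; exists d; split => //; apply: eq_bigr => j _; rewrite E.
Qed.

Section Greedy.
Variables (N M : nat) (c : 'I_N -> 'cV[R]_M).
Hypothesis c_rfixed : forall j, rfixed (c j).

Definition before (j : 'I_N) : pred 'I_N := fun j' => (j' < j)%N.

Definition greedy := [set j : 'I_N | ~~ asbool (spanned c (before j) (c j))].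

Lemma greedyP j : j \in greedy -> ~ spanned c (before j) (c j).
Proof. by rewrite inE => /negP H1 H2; apply/H1/asboolP. Qed.

Lemma greedyPn j : j \notin greedy -> spanned c (before j) (c j).
Proof. by rewrite inE negbK => /asboolP. Qed.

Lemma spanned_greedy_le (j : 'I_N) :
  spanned c (fun j' => (j' \in greedy) && (j' <= j)%N) (c j).
Proof.
elim: {j}_.+1 {-2}j (ltnSn j) => [//|t IH] j hj.
have [hG|/greedyPn hspan] := boolP (j \in greedy).
  by apply: spanned_gen => //=; rewrite hG leqnn.
apply: spanned_trans hspan _ => j' hj'.
apply: spanned_sub (IH j' (leq_trans hj' hj)) => // j'' /andP [-> h] /=.
exact: leq_trans h (ltnW hj').
Qed.

Lemma spanned_greedy_before j y : spanned c (before j) y ->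
  spanned c (fun j' => (j' \in greedy) && (j' < j)%N) y.
Proof.
move=> hy; apply: spanned_trans hy _ => j' hj'.
apply: spanned_sub (spanned_greedy_le j') => // j'' /andP [-> h] /=.
exact: leq_ltn_trans h hj'.
Qed.

Lemma greedy_spanned y : spanned c predT y -> spanned c (fun j => j \in greedy) y.
Proof.
move=> hy; apply: spanned_trans hy _ => j _.
by apply: spanned_sub (spanned_greedy_le j) => // j' /andP [].
Qed.

Lemma greedy_inj : {in greedy &, injective c}.
Proof.
move=> j1 j2 h1 h2 E; case: (ltngtP j1 j2) => [lt|lt|/val_inj //].
  by case: (greedyP h2); rewrite -E; apply: spanned_gen.
by case: (greedyP h1); rewrite E; apply: spanned_gen.
Qed.

(* The last index carrying a nonzero coefficient would be spanned by the earlier ones. *)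
Lemma greedy_free : dfree c greedy.
Proof.
move=> d hd hs j0 hj0; apply/eqP/negPn/negP => nz0.
have hS0 : (j0 \in greedy) && (d j0 != 0) by rewrite hj0.
case: (@arg_maxnP _ j0 (fun j => (j \in greedy) && (d j != 0)) val hS0) => jm /andP [hjm nzm] jmax.
have [y [hy hdy _]] := (L_division hk).2 _ (hd jm) nzm.
have E : c jm = rscal (rscal (c jm) (d jm)) y by rewrite rscalA hdy c_rfixed.
move: hs; rewrite (bigD1 jm) //= => /eqP; rewrite addr_eq0 => /eqP Ejm.
apply: (greedyP hjm); rewrite E Ejm rscalNl; apply/spannedN/spanned_rscal => //.
apply: spanned_sum => j /andP [hj nj].
have [->|nzj] := eqVneq (d j) 0; first by rewrite rscalr0; apply: spanned0.
apply: spanned_rscal => //; apply: spanned_gen => //.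
by rewrite /before ltn_neqAle (inj_eq val_inj) nj; apply: jmax; rewrite hj.
Qed.

Lemma dfree_notin_span (B : {set 'I_N}) x : dfree c B -> x \in B ->
  ~ spanned c (fun j => (j \in B) && (j != x)) (c x).
Proof.
move=> hB hx [d [hd Ed]].
pose d' j := if j == x then - ek else d j.
have hd' j : D (d' j) by rewrite /d'; case: eqP => _; [apply/inLN/inL_e0 | exact: hd].
suff /eqP : d' x = 0 by rewrite /d' eqxx oppr_eq0 (negbTE (L_division hk).1).
apply: (hB d' hd' _ x hx); rewrite (bigD1 x) //=.
have -> : \sum_(j in B | j != x) rscal (c j) (d' j) = c x.
  by rewrite Ed; apply: eq_bigr => j /andP [_ /negbTE hj]; rewrite /d' hj.
by rewrite /d' eqxx rscalNr c_rfixed addNr.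
Qed.

(* Compare the greedy set with a basis [B] at the first index where they differ. *)
Lemma greedy_lexmin (B : {set 'I_N}) :
  (forall j, spanned c (fun j' => j' \in B) (c j)) -> dfree c B ->
  lexle (sortedS greedy) (sortedS B).
Proof.
move=> B_spans B_free.
have [->|neq] := eqVneq greedy B; first exact: lexle_refl.
have [j0 hj0] : exists j0, (j0 \in greedy) != (j0 \in B).
  apply/existsP; apply: contraNT neq => /existsPn H; apply/eqP/setP => j.
  by apply/eqP; have := H j; rewrite negbK.
case: (@arg_minnP _ j0 (fun j => (j \in greedy) != (j \in B)) val hj0) => x hx xmin.
have agree (j : 'I_N) : (j < x)%N -> (j \in greedy) = (j \in B).
  by move=> hj; apply/eqP; apply: contraTT hj => /xmin; rewrite -leqNgt.
have hxB : (x \in B) = ~~ (x \in greedy) by move: hx; case: (x \in B) (x \in greedy) => [] [].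
have [hxG|hxG] := boolP (x \in greedy); rewrite hxG in hxB; last first.
  case: (dfree_notin_span B_free hxB).
  apply: spanned_sub (spanned_greedy_before (greedyPn hxG)) => // j /andP [hj hjx].
  by rewrite -agree // hj neq_ltn hjx.
apply: (lexle_first_diff (x := x)); rewrite ?sortedS_sorted ?mem_sortedS ?hxG ?hxB //.
  move=> y hy; have hyN := ltn_trans hy (ltn_ord x).
  by rewrite -[y]/(val (Ordinal hyN)) !mem_sortedS agree.
apply/negPn/negP => /hasPn noB; apply: (greedyP hxG).
apply: spanned_sub (B_spans x) => // j hj.
have := noB (val j); rewrite mem_sortedS hj -leqNgt => /(_ isT).
by rewrite /before leq_eqVlt => /orP [/eqP/val_inj hjx|//]; move: hj; rewrite hjx hxB.
Qed.

End Greedy.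

Lemma inMk_spanned_stdv N (z : 'cV[R]_(muT * N)) u :
  (forall x, D x -> u * x = x) -> inMk k z ->
  spanned (fun j : 'I_(mu k * N) => stdv (muT * N) (vidx k j) u) predT z.
Proof.
move=> hu hz; exists (fun j => mxe z (vidx k j) 0); split.
  move=> j; have hv := vidx_lt mu_gt0 hk (ltn_ord j).
  have := hz (Ordinal hv); rewrite (mem_block (ltn_mod_muT _) hk) /= blk_vidx // eqxx.
  by rewrite -[vidx k j]/(val (Ordinal hv)) mxe_col.
apply/matrixP => I o; rewrite (ord1 o) summxE; under eq_bigr do rewrite !mxE.
have := hz I; rewrite (mem_block (ltn_mod_muT I) hk).
have [hb hzI|hb ->] := eqVneq (blk (I %% muT)) k; last first.
  rewrite big1 // => j _; case: eqP => E; last by rewrite mul0r.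
  by move: hb; rewrite E blk_vidx // eqxx.
have [j0 hj0 Ej0] := vidx_onto mu_gt0 hk (ltn_ord I) hb.
rewrite (bigD1 (Ordinal hj0)) //= Ej0 eqxx mxe_col hu // big1 ?addr0 // => j nj.
case: eqP => E; last by rewrite mul0r.
by case/eqP: nj; apply/val_inj/(vidx_inj mu_gt0 hk); rewrite /= Ej0 E.
Qed.

(* Since a_P b_(k,p) vanishes unless P is position p of block k, where it is
   e_k, the witness below has y as its column off k. *)
Lemma inMk_phicol0 n (y : 'cV[R]_(muT * n)) : inMk k y ->
  exists Y : 'cV[R]_n, y = phicol Y k 0.
Proof.
move=> hy; exists (\col_r (\sum_(p < mu k) b k p * mxe y (r * muT + off k + p)%N 0)).
apply/matrixP => I o; rewrite (ord1 o) phicolE ?muln1 ?mu_gt0 // div0n mod0n (ab0 hk).2.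
rewrite (mxeE _ (ltn_div_muT I) (ltn0Sn 0)) mxE mulr_sumr mulr_suml.
have [hbq hpos hoff] := blkP (ltn_mod_muT I).
have := hy I; rewrite (mem_block (ltn_mod_muT I) hk).
have [hb hyI|hb ->] := eqVneq (blk (I %% muT)) k; last first.
  by rewrite big1 // => p _; rewrite mulrA mul_ab ?ltn_ord // (negbTE hb) /= !mul0r.
rewrite hb in hpos hoff *; rewrite (bigD1 (Ordinal hpos)) //= big1 ?addr0.
  rewrite mulrA mul_ab // !eqxx /= -addnA hoff -divn_eq mxe_col.
  by rewrite -{1}hyI.
move=> p np; rewrite mulrA mul_ab ?ltn_ord // eqxx /=.
case: eqP => [E|_]; last by rewrite !mul0r.
by case/eqP: np; apply: val_inj; rewrite /= E.
Qed.

Lemma surj_spanned n m (h : 'M[R]_(n, m)) y : surj_mx h -> inMk k y ->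
  spanned (fun j : 'I_(mu k * m) => phicol h k j) predT y.
Proof.
move=> hs /inMk_phicol0 [Y ->]; have [x <-] := hs Y; rewrite phicolM.
apply: spanned_mulmx; apply: inMk_spanned_stdv => [z _|]; first exact: mul1r.
by apply: phicol_inMk; rewrite // muln1 mu_gt0.
Qed.

Lemma wvec_spanned N (y : 'cV[R]_(muT * N)) : inMk k y ->
  spanned (fun s : 'I_(mu k * N) => wvec q mu e N k s) predT y.
Proof. by apply: inMk_spanned_stdv => x; apply: inL_e0l. Qed.

Definition greedyS n m (h : 'M[R]_(n, m)) : {set 'I_(mu k * m)} :=
  greedy (fun j : 'I_(mu k * m) => phicol h k j).

Lemma phicol_rfixed n m (h : 'M[R]_(n, m)) (j : 'I_(mu k * m)) : rfixed (phicol h k j).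
Proof. exact/inMk_rfixed/phicol_inMk. Qed.

Lemma greedy_basis n m (h : 'M[R]_(n, m)) : surj_mx h -> is_basis_k q e a b h (greedyS h).
Proof.
move=> hs; split.
- by move=> j _; apply: phicol_inMk.
- exact: greedy_inj (phicol_rfixed h).
- by move=> y /(surj_spanned hs) /(greedy_spanned (phicol_rfixed h)).
- exact: greedy_free (phicol_rfixed h).
Qed.

Lemma greedy_lexmin_basis n m (h : 'M[R]_(n, m)) (S : {set 'I_(mu k * m)}) :
  is_basis_k q e a b h S -> lexle (sortedS (greedyS h)) (sortedS S).
Proof.
move=> [_ _ S_spans S_free]; apply: (greedy_lexmin (phicol_rfixed h)) => [j|//].
by apply: S_spans; apply: phicol_inMk.
Qed.

Lemma greedy_frakS n m (h : 'M[R]_(n, m)) : surj_mx h -> is_frakS q e a b h (greedyS h).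
Proof. by move=> hs; split=> [|S]; [exact: greedy_basis | exact: greedy_lexmin_basis]. Qed.

Lemma frakS_greedy n m (h : 'M[R]_(n, m)) (S : {set 'I_(mu k * m)}) :
  surj_mx h -> is_frakS q e a b h S -> S = greedyS h.
Proof.
move=> hs [S_basis S_min]; apply: sortedS_inj; apply: lexle_anti.
  exact: S_min _ (greedy_basis hs).
exact: greedy_lexmin_basis.
Qed.

Lemma wvec_inMk N s : (s < mu k * N)%N -> inMk k (wvec q mu e N k s).
Proof.
move=> hs I; rewrite (mem_block (ltn_mod_muT I) hk) !mxE.
have [->|_] := eqVneq (val I) (vidx k s); last by case: ifP => _ //; exact: inL0.
by rewrite blk_vidx // eqxx; exact: inL_e0.
Qed.

Lemma PhiM_wvec n m (h : 'M[R]_(n, m)) s : (s < mu k * m)%N ->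
  PhiM h *m wvec q mu e m k s = phicol h k s.
Proof.
move=> hs; have hv := vidx_lt mu_gt0 hk hs.
rewrite -(inMk_rfixed (phicol_inMk h hk hs)) /phicol /wvec /vvec.
rewrite (_ : vidx k s = Ordinal hv) // !mulmx_stdv.
by apply/matrixP => I o; rewrite !mxE mulr1.
Qed.

Definition greedy_adapted n m (h : 'M[R]_(n, m)) :=
  forall i, (i < mu k * n)%N ->
    phicol h k (nth 0%N (sortedS (greedyS h)) i) = wvec q mu e n k i.

Section Adapted.
Variables (n m : nat) (h : 'M[R]_(n, m)).
Hypothesis h_adapted : greedy_adapted h.
Local Notation g := (sortedS (greedyS h)).

(* A greedy index past position mu_k n would carry a column spanned by the
   earlier greedy columns w_s. *)
Lemma size_greedy_le : (size g <= mu k * n)%N.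
Proof.
rewrite leqNgt; apply/negP => hlt.
set J := Ordinal (nth_sortedS_lt hlt).
have hJ : J \in greedyS h by rewrite -mem_sortedS mem_nth.
apply: (greedyP hJ); apply: spanned_trans (wvec_spanned (phicol_inMk h hk (ltn_ord J))) _.
move=> s _; have hsg := ltn_trans (ltn_ord s) hlt.
rewrite -h_adapted //; apply: (spanned_gen (j0 := Ordinal (nth_sortedS_lt hsg))).
  by rewrite /before /= sorted_ltn_nthE ?sortedS_sorted.
exact: phicol_rfixed.
Qed.

(* Otherwise w_s, s = size g, has a nonzero entry where every greedy column
   w_t, t < s, vanishes. *)
Lemma size_greedy_ge : surj_mx h -> (mu k * n <= size g)%N.
Proof.
move=> hs; rewrite leqNgt; apply/negP => hlt.
have [d [_ Ew]] := greedy_spanned (phicol_rfixed h) (surj_spanned hs (wvec_inMk hlt)).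
have hv := vidx_lt mu_gt0 hk hlt.
move: (congr1 (fun M : 'cV[R]_(muT * n) => M (Ordinal hv) 0) Ew).
rewrite /= !mxE eqxx summxE big1 => [E|j hj]; first by case/eqP: (L_division hk).1.
have hjg : val j \in g by rewrite mem_sortedS.
have ht : (index (val j) g < size g)%N by rewrite index_mem.
rewrite mxE -(nth_index 0%N hjg) h_adapted ?(ltn_trans ht) // !mxE /=.
case: eqP => [/(vidx_inj mu_gt0 hk) E|_]; last by rewrite mul0r.
by move: ht; rewrite E ltnn.
Qed.

Lemma size_greedy : surj_mx h -> size g = (mu k * n)%N.
Proof. by move=> hs; apply/eqP; rewrite eqn_leq size_greedy_le size_greedy_ge. Qed.

End Adapted.

Section Composition.
Variables (n m l : nat) (h1 : 'M[R]_(n, m)) (h2 : 'M[R]_(l, n)).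
Hypotheses (h1_surj : surj_mx h1) (h1_adapted : greedy_adapted h1).
Local Notation g1 := (sortedS (greedyS h1)).
Local Notation g2 := (sortedS (greedyS h2)).

Lemma phicolM_nth s : (s < mu k * n)%N ->
  phicol (h2 *m h1) k (nth 0%N g1 s) = phicol h2 k s.
Proof. by move=> hs; rewrite phicolM h1_adapted // PhiM_wvec. Qed.

Lemma index_greedy_lt (j : 'I_(mu k * m)) : j \in greedyS h1 ->
  (index (val j) g1 < mu k * n)%N.
Proof. by move=> hj; rewrite -(size_greedy h1_adapted h1_surj) index_mem mem_sortedS. Qed.

Lemma greedyM_notin (j : 'I_(mu k * m)) :
  j \notin greedyS h1 -> j \notin greedyS (h2 *m h1).
Proof.
move=> /greedyPn /(spanned_mulmx (PhiM h2)) hspan; apply/negP => /greedyP; apply.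
by rewrite phicolM; apply: eq_spanned hspan => j'; rewrite /= phicolM.
Qed.

Lemma spanned_wvec_before (j j' : 'I_(mu k * m)) : j \in greedyS h1 -> (j' < j)%N ->
  spanned (fun s : 'I_(mu k * n) => wvec q mu e n k s)
    (fun s => (s < index (val j) g1)%N) (phicol h1 k j').
Proof.
move=> hj hj'; apply: spanned_trans (spanned_greedy_le (phicol_rfixed h1) j') _.
move=> j'' /andP [hj'' hle]; have ht := index_greedy_lt hj''.
have -> : phicol h1 k j'' = wvec q mu e n k (Ordinal ht).
  by rewrite -h1_adapted // nth_index ?mem_sortedS.
apply: spanned_gen; last exact/inMk_rfixed/wvec_inMk.
by rewrite /= sorted_ltn_indexE ?sortedS_sorted ?mem_sortedS // (leq_ltn_trans hle hj').
Qed.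

Lemma greedyM_in (j : 'I_(mu k * m)) (hj : j \in greedyS h1) :
  (j \in greedyS (h2 *m h1)) = (Ordinal (index_greedy_lt hj) \in greedyS h2).
Proof.
set T := Ordinal (index_greedy_lt hj).
have hjg : val j \in g1 by rewrite mem_sortedS.
have cjT : phicol (h2 *m h1) k j = phicol h2 k T by rewrite -phicolM_nth ?nth_index.
rewrite /greedyS /greedy !inE /= cjT; congr negb; apply/asboolP/asboolP => hspan.
  apply: spanned_trans hspan _ => j' hj'; rewrite /= phicolM.
  apply: eq_spanned (spanned_mulmx (PhiM h2) (spanned_wvec_before hj hj')) => s.
  exact: PhiM_wvec.
apply: spanned_trans hspan _ => s hs.
have hs1 : (s < size g1)%N by rewrite (size_greedy h1_adapted h1_surj).
rewrite -phicolM_nth //; apply: (spanned_gen (j0 := Ordinal (nth_sortedS_lt hs1))).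
  rewrite /before /= -(nth_index 0%N hjg) sorted_ltn_nthE ?sortedS_sorted ?index_mem //.
exact: phicol_rfixed.
Qed.

Lemma mem_greedyM (j : 'I_(mu k * m)) :
  (j \in greedyS (h2 *m h1)) = (j \in greedyS h1) && (index (val j) g1 \in g2).
Proof.
have [hj|hj] := boolP (j \in greedyS h1); last exact/negbTE/greedyM_notin.
by rewrite greedyM_in -mem_sortedS.
Qed.

Lemma sortedS_greedyM : sortedS (greedyS (h2 *m h1)) = map (nth 0%N g1) g2.
Proof.
have sz1 := size_greedy h1_adapted h1_surj.
apply: (irr_sorted_eq ltn_trans ltnn); first exact: sortedS_sorted.
  rewrite sorted_map; apply: (@sub_in_sorted _ (fun t => (t < size g1)%N) ltn).
  - by move=> x y hx hy; rewrite /= sorted_ltn_nthE ?sortedS_sorted.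
  - by apply/allP => t /sortedS_lt; rewrite sz1.
  - exact: sortedS_sorted.
move=> x; apply/idP/mapP => [hx|[t ht ->]].
  have hxm := sortedS_lt hx; move: hx; rewrite -[x]/(val (Ordinal hxm)).
  rewrite !mem_sortedS mem_greedyM => /andP [hx1 hx2].
  by exists (index x g1); rewrite // nth_index // -[x]/(val (Ordinal hxm)) mem_sortedS.
have ht1 : (t < size g1)%N by rewrite sz1 (sortedS_lt ht).
rewrite -[nth _ _ _]/(val (Ordinal (nth_sortedS_lt ht1))) mem_sortedS mem_greedyM /=.
rewrite -mem_sortedS mem_nth // index_uniq //.
exact: (sorted_uniq ltn_trans ltnn (sortedS_sorted _)).
Qed.

End Composition.

End DivisionSpan.

Lemma column_adaptedM n m l (h1 : 'M[R]_(n, m)) (h2 : 'M[R]_(l, n)) :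
  column_adapted q mu e a b h1 -> column_adapted q mu e a b h2 ->
  column_adapted q mu e a b (h2 *m h1).
Proof.
move=> [hs1 ad1] [hs2 ad2]; have hs := surj_mxM hs2 hs1.
split=> // k hk S /(frakS_greedy hk hs) -> i hi.
have ag1 := ad1 k hk _ (greedy_frakS hk hs1); have ag2 := ad2 k hk _ (greedy_frakS hk hs2).
have sz2 := size_greedy hk ag2 hs2.
change (phicol (h2 *m h1) k (nth 0%N (sortedS (greedyS k (h2 *m h1))) i) = wvec q mu e l k i).
rewrite (sortedS_greedyM hk h2 hs1 ag1) (nth_map 0%N) ?sz2 //.
rewrite (phicolM_nth hk h2 ag1); first exact: ag2.
by apply: nth_sortedS_lt; rewrite sz2.
Qed.

End ArtinWedderburn.

Unset Implicit Arguments.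

Theorem lemma4p2 (R : nzRingType) (q : nat) (mu : nat -> nat)
    (e a b : nat -> nat -> R) (m n l : nat)
    (h1 : 'M[R]_(n, m)) (h2 : 'M[R]_(l, n)) :
  AW_data q mu e a b ->
  column_adapted q mu e a b h1 ->
  column_adapted q mu e a b h2 ->
  column_adapted q mu e a b (h2 *m h1).
Proof.
move=> [[mu_gt0 e_orth] e_sum ab_iso ab0 [L_offdiag L_division]] ad1 ad2.
exact: (column_adaptedM mu_gt0 e_orth e_sum ab_iso ab0 L_offdiag L_division ad1 ad2).
Qed.
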